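(* Let $\mathcal{X}$ and $\mathcal{Y}$ be finite sets, let $\mathcal{M}\subseteq\mathcal{X}\times\mathcal{Y}$ be a nonempty set (the actual matches), and let $\hat{\mathcal{M}}_H\subseteq\mathcal{X}\times\mathcal{Y}$ be a fixed set (the matches identified by a holdout batch algorithm, chosen independently of the validation samples). Let $\mathcal{S}_{\mathcal{M}}$ be a sample drawn uniformly at random without replacement from $\mathcal{M}$, and let $\mathcal{S}_{\mathcal{X}}$ be a sample drawn uniformly at random without replacement from $\mathcal{X}$. Let $\hat{\mathcal{M}}\subseteq\mathcal{X}\times\mathcal{Y}$ be a set of identified matches (produced by a ''complete'' algorithm) which may depend arbitrarily on $\mathcal{S}_{\mathcal{M}}$ and $\mathcal{S}_{\mathcal{X}}$, and define its recall $R=|\hat{\mathcal{M}}\cap\mathcal{M}|/|\mathcal{M}|$. For $x\in\mathcal{X}$ let $m(x)=|\{y\in\mathcal{Y}:(x,y)\in\mathcal{M}\}|$, and let $k_y$ be an upper bound on $m(x)$ over all $x\in\mathcal{X}$. Then for any $\delta_1,\delta_2>0$, with probability at least $1-\delta_1-\delta_2$, $$R\ \ge\ p^-(\mathcal{M},\mathcal{S}_{\mathcal{M}},\mathbf{1}_{\hat{\mathcal{M}}_H},0,1,\delta_1)-\frac{|\hat{\mathcal{M}}_H\setminus\hat{\mathcal{M}}|}{|\mathcal{X}|\,p^-(\mathcal{X},\mathcal{S}_{\mathcal{X}},m,0,k_y,\delta_2)}.$$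
   Context: PAC bound rules: $p^+$ and $p^-$ are functions which, given a finite set $\mathcal{P}$ (population), a subset $\mathcal{S}\subseteq\mathcal{P}$, a function $f:\mathcal{P}\to\mathbb{R}$, reals $a\le b$ and $\delta>0$, return a real number, and satisfy the following: for every finite set $\mathcal{P}$ with $|\mathcal{P}|=n$, every sample size $s$, and every $f$ with $a\le f(x)\le b$ for all $x\in\mathcal{P}$, if $\mathcal{S}$ is a size-$s$ sample drawn uniformly at random without replacement from $\mathcal{P}$ and $\mu=\frac1n\sum_{x\in\mathcal{P}}f(x)$, then $\Pr\{\mu>p^+(\mathcal{P},\mathcal{S},f,a,b,\delta)\}\le\delta$ and $\Pr\{\mu<p^-(\mathcal{P},\mathcal{S},f,a,b,\delta)\}\le\delta$. $\mathbf{1}_{A}$ denotes the indicator function of a set $A$. *)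

From mathcomp Require Import all_boot all_order all_algebra.
Set Implicit Arguments. Unset Strict Implicit. Unset Printing Implicit Defensive.
Import Order.TTheory GRing.Theory Num.Theory.
Local Open Scope ring_scope.

Definition Pr_unif {R : realFieldType} {T : finType} (A : {set T}) (E : pred T) : R :=
  #|[set x in A | E x]|%:R / #|A|%:R.

(* All possible outcomes of drawing a size-s sample uniformly at random
   without replacement from P (each s-subset of P is equally likely). *)
Definition samples (T : finType) (P : {set T}) (s : nat) : {set {set T}} :=
  [set S : {set T} | (S \subset P) && (#|S| == s)].

Definition pop_mean (R : realFieldType) (T : finType) (P : {set T}) (f : T -> R) : R :=
  (\sum_(x in P) f x) / #|P|%:R.

(* A bound rule: given (P, S, f, a, b, delta) returns a real. *)
Definition bound_rule (R : realFieldType) :=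
  forall T : finType, {set T} -> {set T} -> (T -> R) -> R -> R -> R -> R.

Definition lower_PAC_rule (R : realFieldType) (pm : bound_rule R) : Prop :=
  forall (T : finType) (P : {set T}) (s : nat) (f : T -> R) (a b delta : R),
    a <= b -> 0 < delta -> (forall x, x \in P -> a <= f x <= b) ->
    Pr_unif (samples P s) (fun S => pop_mean P f < pm T P S f a b delta) <= delta.

Definition upper_PAC_rule (R : realFieldType) (pp : bound_rule R) : Prop :=
  forall (T : finType) (P : {set T}) (s : nat) (f : T -> R) (a b delta : R),
    a <= b -> 0 < delta -> (forall x, x \in P -> a <= f x <= b) ->
    Pr_unif (samples P s) (fun S => pop_mean P f > pp T P S f a b delta) <= delta.

Definition mcount {R : realFieldType} (X Y : finType) (M : {set X * Y}) (x : X) : R :=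
  #|[set y : Y | (x, y) \in M]|%:R.

Definition indic {R : realFieldType} (T : finType) (A : {set T}) (t : T) : R :=
  (t \in A)%:R.

Definition recall {R : realFieldType} (X Y : finType) (Mhat M : {set X * Y}) : R :=
  #|Mhat :&: M|%:R / #|M|%:R.

(* Outside two bad events, each of probability at most its delta by the PAC
   property of p^-, both lower bounds hold: p1 := p^-(M, ...) <= |M ∩ MH|/|M|
   and 0 < p2 := p^-(X, ...) <= |M|/|X|, since the mean of m over X is |M|/|X|.
   Every holdout match is either found by Mhat or lies in MH \ Mhat, so
   p1 <= R + |MH \ Mhat|/|M| <= R + |MH \ Mhat|/(|X| p2).  A union bound over
   the product of the two sample spaces finishes the argument. *)
From mathcomp Require Import all_boot all_order all_algebra.
Import Order.TTheory GRing.Theory Num.Theory.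
Local Open Scope ring_scope.
From mathcomp Require Import lra.

Lemma card_samples_gt0 (T : finType) (P : {set T}) (s : nat) :
  (s <= #|P|)%N -> (0 < #|samples P s|)%N.
Proof. by move=> leSP; rewrite /samples cards_draws bin_gt0. Qed.

Lemma Pr_unifX_union_bound (R : realFieldType) (T U : finType)
    (A : {set T}) (B : {set U}) (E : pred (T * U)) (e1 : pred T) (e2 : pred U) :
  A != set0 -> B != set0 ->
  (forall S, S \in setX A B -> ~~ e1 S.1 -> ~~ e2 S.2 -> E S) ->
  1 - Pr_unif A e1 - Pr_unif B e2 <= Pr_unif (setX A B) E :> R.
Proof.
move=> /set0Pn/card_gt0P A_gt0 /set0Pn/card_gt0P B_gt0 goodE.
set G := [set S in setX A B | E S].
set B1 := [set t in A | e1 t]; set B2 := [set u in B | e2 u].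
have cover : setX A B \subset G :|: (setX B1 B :|: setX A B2).
  apply/subsetP => -[t u] tuAB; move/setXP: (tuAB) => [tA uB].
  rewrite !inE tA uB /= andbT.
  apply/or3P; have [e1t|n1] := boolP (e1 t); first exact: Or32.
  have [e2u|n2] := boolP (e2 u); first exact: Or33.
  exact/Or31/goodE.
have cardG : (#|A| * #|B| <= #|G| + #|B1| * #|B| + #|A| * #|B2|)%N.
  rewrite -!cardsX -addnA (leq_trans (subset_leq_card cover)) //.
  by rewrite (leq_trans (leq_card_setU _ _)) // leq_add2l leq_card_setU.
rewrite /Pr_unif -/B1 -/B2 -/G cardsX natrM.
set a := #|A|%:R; set b := #|B|%:R.
have a_gt0 : 0 < a :> R by rewrite ltr0n.
have b_gt0 : 0 < b :> R by rewrite ltr0n.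
rewrite ler_pdivlMr ?mulr_gt0 // !mulrBl mul1r mulrA divfK ?gt_eqF //.
rewrite [a * b]mulrC mulrA divfK ?gt_eqF //.
by rewrite -(ler_nat R) !natrD !natrM -/a -/b in cardG; lra.
Qed.

Lemma sum_mcount (R : realFieldType) (X Y : finType) (M : {set X * Y}) :
  \sum_(x in [set: X]) (mcount M x : R) = #|M|%:R.
Proof.
rewrite -natr_sum; congr _%:R.
under eq_bigr => x _ do rewrite -sum1_card.
rewrite (eq_bigl predT) => [|x]; last by rewrite inE.
rewrite pair_big_dep /= -sum1_card; apply: eq_bigl => -[x y] /=.
by rewrite inE.
Qed.

Lemma sum_indic (R : realFieldType) (T : finType) (P A : {set T}) :
  \sum_(x in P) (indic A x : R) = #|P :&: A|%:R.
Proof.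
rewrite (big_setID A) /= [X in _ + X]big1 ?addr0 => [|x]; last first.
  by rewrite inE /indic => /andP[/negPf ->].
rewrite -sum1_card natr_sum; apply: eq_bigr => x.
by rewrite inE /indic => /andP[_ ->].
Qed.

Lemma pop_mean_mcount (R : realFieldType) (X Y : finType) (M : {set X * Y}) :
  pop_mean [set: X] (mcount M) = #|M|%:R / #|X|%:R :> R.
Proof. by rewrite /pop_mean sum_mcount cardsT. Qed.

Lemma pop_mean_indic (R : realFieldType) (T : finType) (P A : {set T}) :
  pop_mean P (indic A) = #|P :&: A|%:R / #|P|%:R :> R.
Proof. by rewrite /pop_mean sum_indic. Qed.

Lemma card_holdout_le (T : finType) (M MH Mhat : {set T}) :
  (#|M :&: MH| <= #|Mhat :&: M| + #|MH :\: Mhat|)%N.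
Proof.
apply: leq_trans (leq_card_setU _ _); apply: subset_leq_card.
apply/subsetP => t; rewrite !inE.
by case: (t \in M); case: (t \in MH); case: (t \in Mhat).
Qed.

Lemma ler_sub_div_lower_bound (R : realFieldType) (p1 p2 n m i r d : R) :
  0 < n -> 0 < m -> 0 < p2 -> p2 <= m / n -> p1 <= i / m ->
  i <= r + d -> 0 <= d ->
  p1 - d / (n * p2) <= r / m.
Proof.
move=> n_gt0 m_gt0 p2_gt0 p2_le p1_le i_le d_ge0.
have np2_le : n * p2 <= m by rewrite mulrC -ler_pdivlMr.
have dm_le : d / m <= d / (n * p2).
  by rewrite ler_wpM2l // lef_pV2 ?posrE ?mulr_gt0.
have im_le : i / m <= r / m + d / m.
  by rewrite -mulrDl ler_wpM2r // invr_ge0 ltW.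
lra.
Qed.

Lemma recall_lower_bound (R : realFieldType) (X Y : finType)
    (M MH Mhat : {set X * Y}) (p1 p2 : R) :
  M != set0 -> 0 < p2 ->
  p1 <= pop_mean M (indic MH) -> p2 <= pop_mean [set: X] (mcount M) ->
  p1 - #|MH :\: Mhat|%:R / (#|X|%:R * p2) <= recall Mhat M.
Proof.
move=> M0 p2_gt0; rewrite pop_mean_indic pop_mean_mcount => p1_le p2_le.
have [[x y] _] := set0Pn _ M0.
rewrite /recall; apply: (@ler_sub_div_lower_bound _ _ _ _ _ #|M :&: MH|%:R) => //.
- by rewrite ltr0n; apply/card_gt0P; exists x.
- by rewrite ltr0n card_gt0.
- by rewrite -natrD ler_nat card_holdout_le.
Qed.

Theorem theorem2 (R : realFieldType) (X Y : finType)
    (M MH : {set X * Y}) (sM sX : nat)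
    (Mhat : {set X * Y} -> {set X} -> {set X * Y})
    (ky delta1 delta2 : R) (pm : bound_rule R) :
  lower_PAC_rule pm ->
  M != set0 ->
  (sM <= #|M|)%N -> (sX <= #|X|)%N ->
  (forall x : X, mcount M x <= ky) ->
  0 < delta1 -> 0 < delta2 ->
  Pr_unif (setX (samples M sM) (samples [set: X] sX))
    (fun S : {set X * Y} * {set X} =>
       let p2 := pm X [set: X] S.2 (mcount M) 0 ky delta2 in
       (0 < p2) ==>
       (pm (X * Y)%type M S.1 (indic MH) 0 1 delta1
          - #|MH :\: Mhat S.1 S.2|%:R / (#|X|%:R * p2)
        <= recall (Mhat S.1 S.2) M))
  >= 1 - delta1 - delta2.
Proof.
move=> pmP M0 sM_le sX_le mcount_le d1_gt0 d2_gt0.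
set mu1 := pop_mean M (@indic R _ MH).
set mu2 := pop_mean [set: X] (@mcount R _ _ M).
pose bad1 S := mu1 < pm (X * Y)%type M S (indic MH) 0 1 delta1.
pose bad2 S := mu2 < pm X [set: X] S (mcount M) 0 ky delta2.
have Pr_bad1 : Pr_unif (samples M sM) bad1 <= delta1.
  apply: pmP => // t _; rewrite /indic.
  by case: (t \in MH); rewrite /= ?lexx ?ler01.
have Pr_bad2 : Pr_unif (samples [set: X] sX) bad2 <= delta2.
  have [[x _] _] := set0Pn _ M0.
  have ky_ge0 : 0 <= ky by apply: le_trans (mcount_le x); rewrite ler0n.
  by apply: pmP => // x' _; rewrite mcount_le /mcount ler0n.
apply: (le_trans _ (@Pr_unifX_union_bound R _ _ _ _ _ bad1 bad2 _ _ _)).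
- by rewrite lerB // lerB.
- by rewrite -card_gt0 card_samples_gt0.
- by rewrite -card_gt0 card_samples_gt0 ?cardsT.
- move=> [S1 S2] _ /=; rewrite -!leNgt => p1_le p2_le.
  by apply/implyP => p2_gt0; apply: recall_lower_bound.
Qed.
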